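(* Let $G$ be the graph representation of a schema category and let $F$ be a set of functional dependencies. Let $G_1$ be the first reduced representation (1RR) of $G$ with respect to $F$, and let $\mathcal{R}=\{R_1,\dots,R_p\}$ be the relational schema obtained from $G_1$ by the relational mapping procedure described in the context. Then each relation schema $R_i\in\mathcal{R}$ is in Boyce–Codd normal form (with respect to the functional dependencies implied by the category and $F$).
   Context: Graph representation of a category: a finite directed graph $G$ whose nodes are objects (sets) of three kinds—entity objects, relationship objects and attribute objects—and whose arrows $X\to Y$ are functions, each read as a functional dependency (FD) $X\to Y$. Each relationship object $O$ has a set $\pi(O)$ of projection objects, with a projection arrow $O\to A$ for each $A\in\pi(O)$. The category is thin (at most one arrow between any two objects), so all diagrams commute. Relevant closure $(G,F)^+$: let $FD(G)$ consist of the FD $X\to Y$ for each arrow of $G$ together with, for each relationship object $X$ with projection objects $A_1,\dots,A_n$, the FDs $X\to A_1\cdots A_n$ and $A_1\cdots A_n\to X$; let $D=FD(G)\cup F$. For each left-hand side $X$ of an FD in $D$: if $X$ is not a node of $G$, add it as a node (a composite left-hand side becoming a new node with projection arrows to its components); compute the attribute closure $X^+$ from $D$ using Armstrong's axioms (reflexivity/projection, augmentation, transitivity/composition); for every node $Y$ of $G$ with $Y\in X^+$, add an arrow $X\to Y$ if none exists. A graph $G$ covers $G'$ (w.r.t. $F$) if every arrow of $G'$ is an arrow of $(G,F)^+$; $G$ and $G'$ are equivalent if each covers the other. First reduced representation (1RR): compute $(G,F)^+$; then for each arrow $f$ in turn, remove $f$ if the graph with $f$ deleted is equivalent to the current graph;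 return the resulting graph. Relational mapping: for a node $O$ let $\lambda(O)$ be its name, $outNbr(O)$ the set of nodes $N$ with an arrow $O\to N$, and $bin(O)$ the set of nodes $N$ with arrows both $O\to N$ and $N\to O$. For each not-yet-processed node $O$ having at least one outgoing arrow, create a relation $R$ whose attribute set $sort(R)$ is initially $\{SK\}$ (a surrogate key) if $O$ is an entity or relationship object and $\{\lambda(O)\}$ otherwise; then apply AddNeighbours$(R,O)$: for each $N\in outNbr(O)$, add $\lambda(N)$ to $sort(R)$ (as a foreign key referencing the surrogate key of the relation of $N$ if $N$ is an entity or relationship object), and if $N\in bin(O)$, recursively apply AddNeighbours$(R,N)$ and mark $N$ processed; mark $O$ processed. Finally (cleaning), remove from each relation any surrogate key not referenced by another relation, and remove any relation $R_i$ with $sort(R_i)\subseteq sort(R_j)$ for another relation $R_j$. A relation schema $R$ is in Boyce–Codd normal form (BCNF) if for every nontrivial FD $A\to B$ holding on $R$, $A$ is a superkey of $R$. *)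

From mathcomp Require Import all_boot.
Set Implicit Arguments. Unset Strict Implicit. Unset Printing Implicit Defensive.

Inductive okind := Entity | Relationship | Attribute.
Definition is_rel (k : okind) : bool := if k is Relationship then true else false.
(* entity or relationship object (these get surrogate keys) *)
Definition is_er (k : okind) : bool := if k is Attribute then false else true.

Section Defs.
Variable U : finType.   (* the (finite) set of objects of the schema category *)

Record sgraph := SGraph {
  snodes  : {set U};
  sarrows : {set U * U};           (* arrows X -> Y (thin: at most one)    *)
  skind   : U -> okind;
  sproj   : U -> {set U}
}.

Definition wf_sgraph (G : sgraph) : Prop :=
  sarrows G \subset setX (snodes G) (snodes G) /\
  forall O, O \in snodes G -> is_rel (skind G O) ->
    [/\ sproj G O != set0, sproj G O \subset snodes G &
        forall A, A \in sproj G O -> (O, A) \in sarrows G].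

Definition fd := ({set U} * {set U})%type.

Definition wf_fds (G : sgraph) (F : {set fd}) : Prop :=
  forall f, f \in F -> f.1 != set0 /\ f.1 :|: f.2 \subset snodes G.

(* Working graphs.  A node is a set of objects: an original object O is the *)
(* node [set O]; a composite left-hand side {A1,...,An} is the node          *)
(* [set A1; ...; An].  Functionally, a node stands for its set of objects.  *)
Definition node := {set U}.

Record graph := Graph {
  nodes  : {set node};
  arrows : {set node * node};
  kind   : node -> okind;
  proj   : node -> {set node}
}.

Definition embed (G : sgraph) : graph :=
  Graph [set [set u] | u in snodes G]
        [set ([set p.1], [set p.2]) | p in sarrows G]
        (fun X => if [pick u in X] is Some u then skind G u else Attribute)
        (fun X => if [pick u in X] is Some u then [set [set a] | a in sproj G u]
                  else set0).

Definition FDg (H : graph) : {set fd} :=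
  [set (p.1, p.2) | p in arrows H] :|:
  [set (X, \bigcup_(A in proj H X) A) | X in nodes H & is_rel (kind H X)] :|:
  [set (\bigcup_(A in proj H X) A, X) | X in nodes H & is_rel (kind H X)].

(* Attribute closure X^+ w.r.t. a set D of FDs (least superset of X closed *)
(* under D; this is the closure computed with Armstrong's axioms).         *)
Definition fd_closed (D : {set fd}) (S : {set U}) : bool :=
  [forall f in D, (f.1 \subset S) ==> (f.2 \subset S)].
Definition attr_closure (D : {set fd}) (X : {set U}) : {set U} :=
  \bigcap_(S : {set U} | (X \subset S) && fd_closed D S) S.

Definition implies (D : {set fd}) (X Y : {set U}) : bool :=
  Y \subset attr_closure D X.

Definition gclosure (F : {set fd}) (H : graph) : graph :=
  let D := FDg H :|: F in
  let lhs := [set f.1 | f in D] in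
  let new := lhs :\: nodes H in
  let N' := nodes H :|: lhs in
  Graph N'
    (arrows H :|:
     [set p | (p.1 \in new) && [exists u in p.1, p.2 == [set u]]] :|:
     [set p | [&& p.1 \in lhs, p.2 \in N' & p.2 \subset attr_closure D p.1]])
    (fun X => if X \in nodes H then kind H X else Relationship)
    (fun X => if X \in nodes H then proj H X else [set [set u] | u in X]).

Definition covers (F : {set fd}) (H H' : graph) : bool :=
  arrows H' \subset arrows (gclosure F H).
Definition gequiv (F : {set fd}) (H H' : graph) : bool :=
  covers F H H' && covers F H' H.

Definition del_arrow (H : graph) (f : node * node) : graph :=
  Graph (nodes H) (arrows H :\ f) (kind H) (proj H).

(* First reduced representation, for a given order [ord] on the arrows of  *)
(* (G,F)^+ in which they are examined.                                     *)
Definition rr1_from (F : {set fd}) (H0 : graph) (ord : seq (node * node)) : graph :=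
  foldl (fun H f => if gequiv F (del_arrow H f) H then del_arrow H f else H) H0 ord.

(* Relational mapping.  Attributes of relations: inl O is the surrogate key *)
(* SK of the relation created for node O; inr N is the name lambda(N).     *)
Definition attr := (node + node)%type.

Definition outNbr (H : graph) (O : node) : {set node} := [set N | (O, N) \in arrows H].
Definition binrel (H : graph) : rel node :=
  fun a b => ((a, b) \in arrows H) && ((b, a) \in arrows H).
(* nodes visited by the recursive AddNeighbours starting from O *)
Definition bcomp (H : graph) (O : node) : {set node} := [set N | connect (binrel H) O N].

Definition init_sort (H : graph) (O : node) : {set attr} :=
  if is_er (kind H O) then [set inl O] else [set inr O].

Definition rel_sort (H : graph) (O : node) : {set attr} :=
  init_sort H O :|: [set inr N | N in \bigcup_(M in bcomp H O) outNbr H M].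

(* a created relation: (owner O, nodes processed with it, sort) *)
Definition rel3 := (node * {set node} * {set attr})%type.

Definition map_step (H : graph) (st : {set node} * seq rel3) (O : node) :=
  if (O \notin st.1) && (outNbr H O != set0)
  then (st.1 :|: bcomp H O, rcons st.2 (O, bcomp H O, rel_sort H O))
  else st.

Definition raw_map (H : graph) (nord : seq node) : seq rel3 :=
  (foldl (map_step H) (set0, [::]) nord).2.

Definition r0 : rel3 := (set0, set0, set0).

(* the surrogate key of relation i is referenced by another relation j:     *)
(* j contains the foreign key lambda(N) for an entity/relationship node N   *)
(* whose relation is relation i.                                           *)
Definition referenced (H : graph) (rs : seq rel3) (i : nat) : bool :=
  has (fun j => (j != i) &&
         [exists N in (nth r0 rs i).1.2,
            is_er (kind H N) && (inr N \in (nth r0 rs j).2)])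
      (iota 0 (size rs)).

Definition clean_keys (H : graph) (rs : seq rel3) : seq {set attr} :=
  [seq (if referenced H rs i then (nth r0 rs i).2
        else (nth r0 rs i).2 :\ inl (nth r0 rs i).1.1) | i <- iota 0 (size rs)].

Definition clean_subsumed (ss : seq {set attr}) : seq {set attr} :=
  [seq nth set0 ss i | i <- iota 0 (size ss) &
     ~~ has (fun j => (j != i) &&
              ((nth set0 ss i \proper nth set0 ss j) ||
               ((nth set0 ss i == nth set0 ss j) && (j < i))))
            (iota 0 (size ss))].

Definition relmap (H : graph) (nord : seq node) : seq {set attr} :=
  clean_subsumed (clean_keys H (raw_map H nord)).

(* BCNF.  An attribute denotes a set of objects: SK of O's relation denotes *)
(* O, lambda(N) denotes N.                                                 *)
Definition attr_obj (a : attr) : node := match a with inl X => X | inr N => N end.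
Definition attr_sem (A : {set attr}) : {set U} := \bigcup_(a in A) attr_obj a.

Definition BCNF (D : {set fd}) (R : {set attr}) : Prop :=
  forall A B : {set attr}, A \subset R -> B \subset R -> ~~ (B \subset A) ->
    implies D (attr_sem A) (attr_sem B) -> implies D (attr_sem A) (attr_sem R).

End Defs.

From Pilot Require Import Defs.
From mathcomp Require Import all_boot.
Set Implicit Arguments. Unset Strict Implicit. Unset Printing Implicit Defensive.

(* Every relation produced by the mapping lies inside the sort built for some
   node O: the key of O and the targets of the arrows leaving the component C
   of O under two-way arrows, all of which O determines.  So a set A of its
   attributes is a superkey as soon as A determines O.  If A determines an
   attribute outside A, that attribute is either a node of C, which determines
   O, or the target N of an arrow M -> N with M in C and N outside C.  In the
   latter case A determines M, for otherwise M -> N would be redundant and the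
   1RR would have deleted it.  Neither the relevant closure nor the 1RR changes
   attribute closures, so all of this can be computed in the reduced graph. *)

Section AttrClosure.
Variable U : finType.
Implicit Types (D : {set fd U}) (X Y S : {set U}) (f : fd U) (R : {set attr U}).

Lemma fd_closedP D S :
  reflect (forall f, f \in D -> f.1 \subset S -> f.2 \subset S) (fd_closed D S).
Proof. by apply: (iffP forall_inP) => h f /h /implyP. Qed.

Lemma subset_attr_closure D X : X \subset attr_closure D X.
Proof. by apply/bigcapsP => S /andP[]. Qed.

Lemma attr_closure_min D X S :
  X \subset S -> fd_closed D S -> attr_closure D X \subset S.
Proof. by move=> XS cS; apply: bigcap_inf; rewrite XS cS. Qed.

Lemma attr_closure_closed D X : fd_closed D (attr_closure D X).
Proof.
apply/fd_closedP => f fD f1; apply/bigcapsP => S /andP[XS cS].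
by move/fd_closedP: (cS); apply=> //; apply: subset_trans f1 (attr_closure_min XS cS).
Qed.

Lemma attr_closure_fd D X f :
  f \in D -> f.1 \subset attr_closure D X -> f.2 \subset attr_closure D X.
Proof. exact/fd_closedP/attr_closure_closed. Qed.

Lemma fd_attr_closure D f : f \in D -> f.2 \subset attr_closure D f.1.
Proof. by move=> fD; apply: attr_closure_fd fD (subset_attr_closure _ _). Qed.

Lemma attr_closure_sub D X Y :
  Y \subset attr_closure D X -> attr_closure D Y \subset attr_closure D X.
Proof. by move=> YX; apply: attr_closure_min YX (attr_closure_closed _ _). Qed.

Lemma attr_closure_set0 D :
  (forall f, f \in D -> f.1 != set0) -> attr_closure D set0 = set0.
Proof.
move=> hD; apply/eqP; rewrite -subset0; apply: attr_closure_min (sub0set _) _.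
by apply/fd_closedP => f /hD; rewrite subset0 => /negbTE ->.
Qed.

Lemma attr_closure_drop_fd D D' f X :
  D \subset f |: D' -> ~~ (f.1 \subset attr_closure D' X) ->
  attr_closure D X \subset attr_closure D' X.
Proof.
move=> sD nf1; apply: attr_closure_min (subset_attr_closure _ _) _.
apply/fd_closedP => g /(subsetP sD) /setU1P[-> /(negP nf1) //|].
exact: attr_closure_fd.
Qed.

Lemma connect_attr_closure (e : rel {set U}) (P : pred {set U}) D x y :
  (forall a b, P a -> e a b -> P b /\ b \subset attr_closure D a) ->
  P x -> connect e x y -> y \subset attr_closure D x.
Proof.
move=> he Px /connectP[p pth ->] {y}; elim: p x pth Px => [|z p IH] x /=.
  by move=> _ _; apply: subset_attr_closure.
move=> /andP[exz pth] Px; have [Pz zx] := he x z Px exz.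
exact: subset_trans (IH z pth Pz) (attr_closure_sub zx).
Qed.

Definition entails D1 D2 := forall f, f \in D2 -> f.2 \subset attr_closure D1 f.1.

Lemma entails_closure D1 D2 X :
  entails D1 D2 -> attr_closure D2 X \subset attr_closure D1 X.
Proof.
move=> h; apply: attr_closure_min (subset_attr_closure _ _) _.
apply/fd_closedP => f fD f1.
exact: subset_trans (h f fD) (attr_closure_sub f1).
Qed.

Lemma sub_entails D1 D2 : D2 \subset D1 -> entails D1 D2.
Proof. by move=> sD f fD; apply: fd_attr_closure (subsetP sD f fD). Qed.

Lemma entails_trans D1 D2 D3 : entails D1 D2 -> entails D2 D3 -> entails D1 D3.
Proof. by move=> h12 h23 f fD; apply: subset_trans (h23 f fD) (entails_closure _ h12). Qed.

Lemma attr_closure_eq D1 D2 :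
  entails D1 D2 -> entails D2 D1 -> attr_closure D1 =1 attr_closure D2.
Proof. by move=> h12 h21 X; apply/eqP; rewrite eqEsubset !entails_closure. Qed.

Lemma bigcup_imset_set1 S : \bigcup_(A in [set [set u] | u in S]) A = S.
Proof.
apply/setP => x; apply/bigcupP/idP => [[A /imsetP[u uS ->]]|xS].
  by rewrite inE => /eqP ->.
by exists [set x]; [apply: imset_f | rewrite inE].
Qed.

Lemma attr_semS R R' : R \subset R' -> attr_sem R \subset attr_sem R'.
Proof. by move=> sR; apply/bigcupsP => a aR; apply: bigcup_sup (subsetP sR a aR). Qed.

Lemma BCNF_subset D R R' : R' \subset R -> BCNF D R -> BCNF D R'.
Proof.
move=> sR hR A B AR' BR' nBA hAB.
apply: subset_trans (attr_semS sR) (hR A B _ _ nBA hAB); exact: subset_trans sR.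
Qed.

Lemma BCNF_eq_closure D D' R :
  attr_closure D =1 attr_closure D' -> BCNF D R -> BCNF D' R.
Proof. by rewrite /BCNF /Defs.implies => e h A B; rewrite -!e; apply: h. Qed.

End AttrClosure.

Section Graphs.
Variables (U : finType) (F : {set fd U}).
Implicit Types (H : graph U) (p f : node U * node U).

Lemma arrow_FDg H p : p \in arrows H -> p \in FDg H.
Proof. by case: p => a b pH; rewrite !inE (imset_f (fun q => (q.1, q.2)) pH). Qed.

Lemma del_arrow_FDg H f p : p \in arrows H -> p != f -> p \in FDg (del_arrow H f).
Proof. by move=> pH pf; rewrite arrow_FDg // !inE pf. Qed.

Lemma gclosure_arrow_implied H p :
  p \in arrows (gclosure F H) -> p.2 \subset attr_closure (FDg H :|: F) p.1.
Proof.
rewrite !inE => /orP[/orP[pH|/andP[_ /exists_inP[u up /eqP ->]]]|/and3P[_ _ //]].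
  by apply: fd_attr_closure; rewrite inE arrow_FDg.
by apply: subset_trans (subset_attr_closure _ _); rewrite sub1set.
Qed.

Lemma FDgS H H' :
  nodes H = nodes H' -> kind H = kind H' -> proj H = proj H' ->
  arrows H \subset arrows H' -> FDg H \subset FDg H'.
Proof.
move=> eN eK eP sA; rewrite /FDg eN eK eP; apply/subsetP => g.
rewrite !inE => /orP[/orP[/imsetP[p pH ->]|->]|->]; rewrite ?orbT //.
by rewrite (imset_f (fun q => (q.1, q.2)) (subsetP sA p pH)).
Qed.

Lemma FDg_del_arrow H f : FDg H \subset f |: FDg (del_arrow H f).
Proof.
apply/subsetP => g /setUP[/setUP[/imsetP[[a b] ab ->]|hg]|hg]; rewrite in_setU1.
- by case: (eqVneq (a, b) f) => // abf; rewrite arrow_FDg // !inE abf.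
- by rewrite /FDg /= !inE hg !orbT.
- by rewrite /FDg /= !inE hg !orbT.
Qed.

Lemma gclosure_mono H H' :
  nodes H = nodes H' -> kind H = kind H' -> proj H = proj H' ->
  arrows H \subset arrows H' -> arrows (gclosure F H) \subset arrows (gclosure F H').
Proof.
move=> eN eK eP sA.
have sD : FDg H :|: F \subset FDg H' :|: F by apply/setSU/FDgS.
have sL := imsetS (fun f : fd U => f.1) sD.
apply/subsetP => p; rewrite !inE eN.
case/orP=> [/orP[pH|/andP[/andP[-> /(subsetP sL) ->] ->]]|/and3P[p1 p2 p3]].
- by rewrite (subsetP sA p pH).
- by rewrite orbT.
apply/orP; right; rewrite (subsetP sL _ p1).
rewrite (subset_trans p3 (entails_closure _ (sub_entails sD))) andbT.
by case/orP: p2 => [-> // | /(subsetP sL) ->]; rewrite orbT.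
Qed.

Lemma FDg_gclosure H : FDg H \subset FDg (gclosure F H).
Proof.
apply/subsetP => g /setUP[/setUP[/imsetP[p pH ->]|]|].
- by rewrite arrow_FDg // -surjective_pairing !inE pH.
- case/imsetP=> X; rewrite inE => /andP[XH hX] ->.
  apply/setUP; left; apply/setUP; right; apply/imsetP; exists X; rewrite /= ?XH //.
  by rewrite !inE XH hX.
- case/imsetP=> X; rewrite inE => /andP[XH hX] ->.
  apply/setUP; right; apply/imsetP; exists X; rewrite /= ?XH //.
  by rewrite !inE XH hX.
Qed.

(* A node created by the closure has itself as its only projection, so its
   relationship FDs are trivial. *)
Lemma gclosure_entails H : entails (FDg H :|: F) (FDg (gclosure F H) :|: F).
Proof.
have old X : X \in nodes H -> is_rel (kind H X) ->
    (X, \bigcup_(A in proj H X) A) \in FDg H /\ (\bigcup_(A in proj H X) A, X) \in FDg H.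
  by move=> XH hX; split; rewrite !inE; apply/orP; [left; apply/orP; right|right];
    apply/imsetP; exists X; rewrite ?inE ?XH.
move=> g /setUP[/setUP[/setUP[/imsetP[p pH ->]|]|]|gF].
- exact: gclosure_arrow_implied pH.
- case/imsetP=> X; rewrite inE => /andP[_] /=.
  case: ifP => [XH hX ->|_ _ ->]; last by rewrite /= bigcup_imset_set1 subset_attr_closure.
  by apply: fd_attr_closure; rewrite inE (old X XH hX).1.
- case/imsetP=> X; rewrite inE => /andP[_] /=.
  case: ifP => [XH hX ->|_ _ ->]; last by rewrite /= bigcup_imset_set1 subset_attr_closure.
  by apply: fd_attr_closure; rewrite inE (old X XH hX).2.
- by apply: fd_attr_closure; rewrite inE gF orbT.
Qed.

Lemma gclosure_attr_closure H :
  attr_closure (FDg (gclosure F H) :|: F) =1 attr_closure (FDg H :|: F).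
Proof.
apply: attr_closure_eq; last exact: gclosure_entails.
by apply/sub_entails/setSU/FDg_gclosure.
Qed.

Lemma rr1_from_shape ord H : let r := rr1_from F H ord in
  [/\ nodes r = nodes H, kind r = kind H, proj r = proj H & arrows r \subset arrows H].
Proof.
elim: ord H => [|f ord IH] H /=; first by split.
case: ifP => _; last exact: IH.
have [-> -> -> s] := IH (del_arrow H f); split => //.
exact: subset_trans s (subsetDl _ _).
Qed.

Lemma del_arrow_entails H f : covers F (del_arrow H f) H ->
  entails (FDg (del_arrow H f) :|: F) (FDg H :|: F).
Proof.
move=> cov g /setUP[/setUP[/setUP[/imsetP[p pH ->]|hg]|hg]|gF].
- exact: gclosure_arrow_implied (subsetP cov p pH).
- by apply: fd_attr_closure; rewrite !inE hg !orbT.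
- by apply: fd_attr_closure; rewrite !inE hg !orbT.
- by apply: fd_attr_closure; rewrite !inE gF !orbT.
Qed.

Lemma rr1_from_entails ord H : entails (FDg (rr1_from F H ord) :|: F) (FDg H :|: F).
Proof.
elim: ord H => [|f ord IH] H /=; first exact: sub_entails.
case: ifP => [/andP[cov _]|_]; last exact: IH.
exact: entails_trans (IH _) (del_arrow_entails cov).
Qed.

Lemma rr1_from_attr_closure ord H :
  attr_closure (FDg (rr1_from F H ord) :|: F) =1 attr_closure (FDg H :|: F).
Proof.
apply: attr_closure_eq; first exact: rr1_from_entails.
have [eN eK eP sA] := rr1_from_shape ord H.
exact/sub_entails/setSU/FDgS.
Qed.

Lemma derivable_arrow_gclosure H f b :
  (f.1, b) \in arrows H -> (f.1, b) != f -> f.2 \in nodes H ->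
  f.2 \subset attr_closure (FDg (del_arrow H f) :|: F) f.1 ->
  f \in arrows (gclosure F (del_arrow H f)).
Proof.
move=> f1b bf f2H hf; rewrite !inE; apply/orP; right; rewrite f2H hf /= andbT.
by apply/imsetP; exists (f.1, b); rewrite // inE del_arrow_FDg.
Qed.

Definition reduced H :=
  forall f, f \in arrows H -> f \notin arrows (gclosure F (del_arrow H f)).

(* An arrow kept by the 1RR was already irredundant when it was examined, and
   later deletions only shrink the closure. *)
Lemma rr1_from_kept ord H f : f \in ord -> f \in arrows (rr1_from F H ord) ->
  f \notin arrows (gclosure F (del_arrow (rr1_from F H ord) f)).
Proof.
elim: ord H => [|g ord IH] H //=; rewrite inE.
have [fo _|_] := boolP (f \in ord); first exact: IH.
rewrite orbF => /eqP <-.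
case: ifP => [_ fr|nequiv fr].
  have [_ _ _ sA] := rr1_from_shape ord (del_arrow H f).
  by move: (subsetP sA f fr); rewrite !inE eqxx.
have [eN eK eP sA] := rr1_from_shape ord H.
apply: contraFN nequiv => fc; apply/andP; split; apply/subsetP => p.
- have sub : arrows (gclosure F (del_arrow (rr1_from F H ord) f)) \subset
             arrows (gclosure F (del_arrow H f)) by apply: gclosure_mono; rewrite //= setSD.
  case: (eqVneq p f) => [-> _|pf pH]; first exact: (subsetP sub).
  by rewrite !inE pf pH.
- by rewrite !inE => /andP[_ ->].
Qed.

Lemma rr1_from_reduced ord H : {subset arrows H <= ord} -> reduced (rr1_from F H ord).
Proof.
move=> Hord f fr; apply: (rr1_from_kept _ fr); apply: Hord.
by have [_ _ _ /subsetP] := rr1_from_shape ord H; apply.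
Qed.

End Graphs.

Section Component.
Variables (U : finType) (H : graph U) (O : node U).

Lemma rel_sort_cases a : a \in rel_sort H O ->
  attr_obj a = O \/ exists N, a = inr N /\ exists2 M, M \in bcomp H O & (M, N) \in arrows H.
Proof.
rewrite inE => /orP[|/imsetP[N /bigcupP[M MC]]].
  by rewrite /init_sort; case: ifP => _; rewrite inE => /eqP ->; left.
by rewrite inE => MN ->; right; exists N; split => //; exists M.
Qed.

Lemma mem_bcomp_self : O \in bcomp H O.
Proof. by rewrite inE connect0. Qed.

Lemma bcomp_connect x y : x \in bcomp H O -> y \in bcomp H O -> connect (binrel H) x y.
Proof.
have binrel_sym : connect_sym (binrel H).
  by apply: sym_connect_sym => a b; rewrite /binrel andbC.
by rewrite !inE => xC yC; rewrite (connect_trans _ yC) // binrel_sym.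
Qed.

Lemma bcomp_binrel x y : x \in bcomp H O -> binrel H x y -> y \in bcomp H O.
Proof. by rewrite !inE => xC xy; rewrite (connect_trans xC (connect1 xy)). Qed.

Variables (D : {set fd U}) (keep : pred (node U)).
Hypothesis keep_bcomp : {subset bcomp H O <= keep}.
Hypothesis kept_arrow_implied : forall a b,
  a \in bcomp H O -> (a, b) \in arrows H -> keep b -> b \subset attr_closure D a.

Lemma bcomp_closure x y :
  x \in bcomp H O -> y \in bcomp H O -> y \subset attr_closure D x.
Proof.
move=> xC yC; apply: (connect_attr_closure (P := mem (bcomp H O))) xC (bcomp_connect xC yC).
move=> a b aC ab; have bC := bcomp_binrel aC ab; split => //.
by case/andP: ab => ab _; apply: kept_arrow_implied ab (keep_bcomp bC).
Qed.

Lemma rel_sort_closure M a : M \in bcomp H O -> a \in rel_sort H O ->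
  keep (attr_obj a) -> attr_obj a \subset attr_closure D M.
Proof.
move=> MC /rel_sort_cases[-> _|[N [-> [M' M'C M'N]]] kN].
  exact: bcomp_closure MC mem_bcomp_self.
exact: subset_trans (kept_arrow_implied M'C M'N kN) (attr_closure_sub (bcomp_closure MC M'C)).
Qed.

Lemma bcomp_kept_arrow M M' N : M \in bcomp H O -> M' \in bcomp H O ->
  (M', N) \in arrows H -> keep N -> exists2 b, (M, b) \in arrows H & keep b.
Proof.
move=> MC M'C M'N kN; have [->|MM'] := eqVneq M M'; first by exists N.
case/connectP: (bcomp_connect MC M'C) => -[_ eM'|y p /= /andP[My _] _].
  by rewrite eM' eqxx in MM'.
by exists y; [case/andP: My | exact/keep_bcomp/(bcomp_binrel MC My)].
Qed.

End Component.

Section ReducedBCNF.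
Variables (U : finType) (F : {set fd U}) (H : graph U).
Let D := FDg H :|: F.
Hypothesis H_reduced : reduced F H.
Hypothesis arrow_target_node : forall p, p \in arrows H -> p.2 \in nodes H.
Hypothesis arrow_target_neq0 : forall p, p \in arrows H -> p.2 != set0.
Hypothesis attr_closure_set0_D : attr_closure D set0 = set0.

Lemma arrow_implied a b : (a, b) \in arrows H -> b \subset attr_closure D a.
Proof. by move=> ab; apply: (fd_attr_closure (f := (a, b))); rewrite inE arrow_FDg. Qed.

(* If A did not determine M even without the arrow M -> N, that closure would
   be closed under M -> N and so contain N; as M determines A through the
   remaining arrows, M -> N would be derivable from them, against reducedness. *)
Lemma exit_arrow_source_closure O (A : {set attr U}) M N :
  A \subset rel_sort H O -> M \in bcomp H O -> (M, N) \in arrows H ->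
  N \notin bcomp H O -> inr N \notin A ->
  N \subset attr_closure D (attr_sem A) -> M \subset attr_closure D (attr_sem A).
Proof.
move=> AR MC MN NC NA hN; set f := (M, N); set D' := FDg (del_arrow H f) :|: F.
have [MA|nMA] := boolP (M \subset attr_closure D' (attr_sem A)).
  apply: subset_trans MA (entails_closure _ (sub_entails _)).
  by apply/setSU/FDgS => //=; apply: subsetDl.
have keepC : {subset bcomp H O <= predC1 N}.
  by move=> x xC; apply: contraNneq NC => <-.
have implied' a b : a \in bcomp H O -> (a, b) \in arrows H -> b != N ->
    b \subset attr_closure D' a.
  move=> _ ab bN; apply: (fd_attr_closure (f := (a, b))).
  by rewrite inE del_arrow_FDg // /f xpair_eqE negb_and bN orbT.
have OM := bcomp_closure keepC implied' (mem_bcomp_self H O).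
have A_keep a : a \in A -> attr_obj a != N.
  move=> aA; case: (rel_sort_cases (subsetP AR a aA)) => [-> | [N' [ea _]]].
    exact: keepC (mem_bcomp_self H O).
  by move: aA; rewrite ea; apply: contraTneq => /= ->.
have AM : attr_sem A \subset attr_closure D' M.
  apply/bigcupsP => a aA.
  exact: (rel_sort_closure keepC implied' MC (subsetP AR a aA) (A_keep a aA)).
have NA' : N \subset attr_closure D' (attr_sem A).
  apply: (subset_trans hN); apply: (attr_closure_drop_fd (f := f) _ nMA).
  by rewrite setUA; apply: setSU (FDg_del_arrow H f).
have /set0Pn[a aA] : A != set0.
  apply: contra_neq (arrow_target_neq0 MN) => A0; apply/eqP; rewrite -subset0.
  by move: hN; rewrite A0 /attr_sem big_set0 attr_closure_set0_D.
have [b Mb bN] : exists2 b, (M, b) \in arrows H & b != N.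
  case: (rel_sort_cases (subsetP AR a aA)) => [Oa | [N' [ea [M' M'C M'N']]]].
    case/negP: nMA; apply: subset_trans (OM M MC) (attr_closure_sub _).
    by rewrite -Oa; apply: subset_trans (bigcup_sup a aA) (subset_attr_closure _ _).
  by apply: bcomp_kept_arrow MC M'C M'N' _; move: (A_keep a aA); rewrite ea.
case/negP: (H_reduced MN); apply: (derivable_arrow_gclosure (b := b)) => //.
- by rewrite /f xpair_eqE negb_and bN orbT.
- exact: arrow_target_node MN.
- exact: subset_trans NA' (attr_closure_sub AM).
Qed.

Lemma rel_sort_BCNF O : BCNF D (rel_sort H O).
Proof.
have keepT : {subset bcomp H O <= predT} by [].
have implied a b : a \in bcomp H O -> (a, b) \in arrows H -> predT b ->
    b \subset attr_closure D a.
  by move=> _ ab _; apply: arrow_implied.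
have closC := bcomp_closure keepT implied.
have OC := mem_bcomp_self H O.
move=> A B AR BR /subsetPn[b bB bA] hAB.
suff OA : O \subset attr_closure D (attr_sem A).
  apply: subset_trans (attr_closure_sub OA); apply/bigcupsP => a aR.
  exact: (rel_sort_closure keepT implied OC aR isT).
have hb : attr_obj b \subset attr_closure D (attr_sem A).
  exact: subset_trans (bigcup_sup b bB) hAB.
case: (rel_sort_cases (subsetP BR b bB)) bA hb => [-> _ //|[N [-> [M MC MN]]] NA hN].
have [NC|NC] := boolP (N \in bcomp H O).
  exact: subset_trans (closC N O NC OC) (attr_closure_sub hN).
have MA := exit_arrow_source_closure AR MC MN NC NA hN.
exact: subset_trans (closC M O MC OC) (attr_closure_sub MA).
Qed.

End ReducedBCNF.

Section RelationalMapping.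
Variables (U : finType) (H : graph U).

Lemma foldl_map_step_sort s (st : {set node U} * seq (rel3 U)) :
  (forall x, x \in st.2 -> x.2 = rel_sort H x.1.1) ->
  forall x, x \in (foldl (map_step H) st s).2 -> x.2 = rel_sort H x.1.1.
Proof.
elim: s st => [|O s IH] st //= hst; apply: IH.
rewrite /map_step; case: ifP => _ //= x.
by rewrite mem_rcons inE => /predU1P[->|]; last exact: hst.
Qed.

Lemma relmap_sub_rel_sort nord R : R \in relmap H nord -> exists O, R \subset rel_sort H O.
Proof.
case/mapP=> i; rewrite mem_filter mem_iota add0n => /andP[_ /andP[_ hi]] ->.
case/mapP: (mem_nth set0 hi) => j; rewrite mem_iota add0n => /andP[_ hj] ->.
set r := nth (r0 U) (raw_map H nord) j.
have er : r.2 = rel_sort H r.1.1.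
  exact: (foldl_map_step_sort (st := (set0, [::]))) (mem_nth (r0 U) hj).
by exists r.1.1; case: ifP => _; rewrite -er ?subsetDl.
Qed.

End RelationalMapping.

Section Embedding.
Variables (U : finType) (G : sgraph U) (F : {set fd U}).
Hypotheses (wfG : wf_sgraph G) (wfF : wf_fds G F).

Lemma pick_set1 (u : U) : [pick v in [set u]] = Some u.
Proof. by case: pickP => [v|/(_ u)]; rewrite inE ?eqxx // => /eqP ->. Qed.

Lemma embed_kind u : kind (embed G) [set u] = skind G u.
Proof. by rewrite /= pick_set1. Qed.

Lemma embed_fd_lhs f : f \in FDg (embed G) :|: F -> f.1 != set0 /\ f.1 \subset snodes G.
Proof.
have [sa wr] := wfG.
have set1_node u : u \in snodes G -> [set u] != set0 /\ [set u] \subset snodes G.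
  by rewrite sub1set -card_gt0 cards1.
case/setUP=> [/setUP[/setUP[]|]|/wfF[f1 /(subset_trans (subsetUl _ _))] //].
- case/imsetP=> q /imsetP[p pa ->] -> /=; apply: set1_node.
  by have := subsetP sa p pa; rewrite inE => /andP[].
- case/imsetP=> X; rewrite inE => /andP[/imsetP[u uS ->] _] ->; exact: set1_node.
- case/imsetP=> X; rewrite inE => /andP[/imsetP[u uS ->]].
  rewrite embed_kind => hr ->; rewrite /= pick_set1 bigcup_imset_set1.
  by have [] := wr u uS hr.
Qed.

Lemma gclosure_embed_node_neq0 X : X \in nodes (gclosure F (embed G)) -> X != set0.
Proof.
case/setUP=> [/imsetP[u _ ->]|/imsetP[f /embed_fd_lhs[] //]]; last by move=> + _ ->.
by rewrite -card_gt0 cards1.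
Qed.

Lemma gclosure_embed_arrow_target p :
  p \in arrows (gclosure F (embed G)) -> p.2 \in nodes (gclosure F (embed G)).
Proof.
have [sa _] := wfG.
rewrite !inE => /orP[/orP[/imsetP[q qa ->]|]|/and3P[_ -> _] //] /=.
  have := subsetP sa q qa; rewrite inE => /andP[_ q2].
  by rewrite (imset_f (fun u => [set u]) q2).
case/andP=> /andP[_ /imsetP[f fD e1]] /exists_inP[u up /eqP ->].
have [_ s] := embed_fd_lhs fD; rewrite -e1 in s.
by rewrite (imset_f (fun u => [set u]) (subsetP s u up)).
Qed.

End Embedding.

Theorem theorem7p1 (U : finType) (G : sgraph U) (F : {set fd U}) :
  wf_sgraph G -> wf_fds G F ->
  forall aord : seq (node U * node U),
    perm_eq aord (enum (arrows (gclosure F (embed G)))) ->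
  forall nord : seq (node U),
    perm_eq nord (enum (nodes (rr1_from F (gclosure F (embed G)) aord))) ->
  forall R, R \in relmap (rr1_from F (gclosure F (embed G)) aord) nord ->
    BCNF (FDg (embed G) :|: F) R.
Proof.
move=> wfG wfF aord aordP nord _ R.
set H0 := gclosure F (embed G); set H1 := rr1_from F H0 aord.
have [eN _ _ sA] := rr1_from_shape F aord H0.
have target_H0 p : p \in arrows H1 -> p.2 \in nodes H0.
  by move/(subsetP sA)/(gclosure_embed_arrow_target wfG wfF).
have cl_H1 : attr_closure (FDg H1 :|: F) =1 attr_closure (FDg (embed G) :|: F).
  by move=> X; rewrite rr1_from_attr_closure gclosure_attr_closure.
case/relmap_sub_rel_sort=> O /BCNF_subset; apply.
apply: (BCNF_eq_closure cl_H1).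
apply: rel_sort_BCNF.
- by apply: rr1_from_reduced => f; rewrite (perm_mem aordP) mem_enum.
- by move=> p /target_H0; rewrite -eN.
- by move=> p /target_H0 /(gclosure_embed_node_neq0 wfG wfF).
- by rewrite cl_H1 attr_closure_set0 // => f /(embed_fd_lhs wfG wfF)[].
Qed.
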